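(* Let $n\ge 1$ and let $\Phi=\Phi(A,O,Y,\bar{\mathbf d})$ be an $n$-mode Gaussian superchannel, with $A=(a_{kl})$, $O=(o_{kl})$, $Y=(y_{kl})$ real $2n\times 2n$ matrices and $\bar{\mathbf d}=(\bar d_1,\dots,\bar d_{2n})^{\mathrm T}\in\mathbb R^{2n}$. Then $\Phi$ is a real Gaussian superchannel if and only if $$\bar d_{2k}=0\quad\text{and}\quad y_{2k-1,2l}=0\qquad\text{for all }k,l\in\{1,\dots,n\},\tag{a}$$ and moreover either $$a_{2k,2l-1}=a_{2k,2l}=0\qquad\text{for all }k,l\in\{1,\dots,n\},\tag{b}$$ or $$a_{2k-1,2l}=a_{2k,2l-1}=0\ \text{ and }\ o_{2k-1,2l}=o_{2k,2l-1}=0\qquad\text{for all }k,l\in\{1,\dots,n\}.\tag{c}$$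
   Context: Fix $n\ge1$. Let $\Delta_n=\bigoplus_{k=1}^n\begin{pmatrix}0&1\\-1&0\end{pmatrix}$ and $\Sigma_n=\bigoplus_{k=1}^n\begin{pmatrix}1&0\\0&-1\end{pmatrix}$ (both $2n\times2n$). An $n$-mode Gaussian channel is identified with a triple $\phi=\phi(T,N,\mathbf d)$, where $T=(t_{kl})$ and $N=(n_{kl})$ are real $2n\times 2n$ matrices with $N=N^{\mathrm T}\ge0$, $\mathbf d=(d_1,\dots,d_{2n})^{\mathrm T}\in\mathbb R^{2n}$, and $N+i\Delta_n-iT\Delta_nT^{\mathrm T}\ge0$ (it maps a Gaussian state with displacement vector $\bar{\mathbf d}_0$ and covariance matrix $\nu$ to the Gaussian state with displacement $T\bar{\mathbf d}_0+\mathbf d$ and covariance matrix $T\nu T^{\mathrm T}+N$). Such a channel is called real if $d_{2k}=0$ and $n_{2k-1,2l}=0$ for all $k,l\in\{1,\dots,n\}$, and either $t_{2k,2l-1}=t_{2k,2l}=0$ for all $k,l$, or $t_{2k-1,2l}=t_{2k,2l-1}=0$ for all $k,l$. An $n$-mode Gaussian superchannel is identified with a quadruple $\Phi=\Phi(A,O,Y,\bar{\mathbf d})$ of real $2n\times2n$ matrices $A,O,Y$ and a vector $\bar{\mathbf d}\in\mathbb R^{2n}$ with $Y=Y^{\mathrm T}$, $OO^{\mathrm T}=I_{2n}$, $Y+i\Delta_n-iA\Delta_nA^{\mathrm T}\ge0$ and $i\Delta_n-iO\Delta_nO^{\mathrm T}\ge0$; it acts on Gaussian channels by $\Phi(\phi(T,N,\mathbf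 d))=\phi(AT\Sigma_nO^{\mathrm T}\Sigma_n,\ ANA^{\mathrm T}+Y,\ A\mathbf d+\bar{\mathbf d})$. A Gaussian superchannel is called real if it maps every real Gaussian channel to a real Gaussian channel. *)

From HB Require Import structures.
From mathcomp Require Import all_boot all_order all_algebra.
From mathcomp Require Import complex.
Set Implicit Arguments. Unset Strict Implicit. Unset Printing Implicit Defensive.
Import Order.TTheory GRing.Theory Num.Theory.
Local Open Scope ring_scope.

(* Indices are 0-based: the paper's (1-based) index 2k-1 is an even index
   here, and the paper's index 2k is an odd index here. *)

Section Defs.
Variable R : rcfType.
Variable n : nat.

(* Delta_n = direct sum of n copies of [[0,1],[-1,0]] *)
Definition Delta : 'M[R]_(2 * n) :=
  \matrix_(i, j)
    if (i : nat)./2 == (j : nat)./2 then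
      (if ~~ odd i && odd j then 1 else if odd i && ~~ odd j then -1 else 0)
    else 0.

Definition Sigma : 'M[R]_(2 * n) :=
  \matrix_(i, j) if i == j then (if odd i then -1 else 1) else 0.

Definition cmx (M : 'M[R]_(2 * n)) : 'M[R[i]]_(2 * n) := map_mx (real_complex R) M.

(* positive semidefiniteness of a complex square matrix:
   v^* M v >= 0 (i.e. real and nonnegative) for every complex vector v *)
Definition psdC (M : 'M[R[i]]_(2 * n)) : Prop :=
  forall v : 'cV[R[i]]_(2 * n), 0 <= ((map_mx (@conjc R) v)^T *m M *m v) 0 0.

Definition unc_mx (N T : 'M[R]_(2 * n)) : 'M[R[i]]_(2 * n) :=
  cmx N + 'i%C *: cmx Delta - 'i%C *: cmx (T *m Delta *m T^T).

Definition gaussian_channel (T N : 'M[R]_(2 * n)) (d : 'cV[R]_(2 * n)) : Prop :=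
  N^T = N /\ psdC (cmx N) /\ psdC (unc_mx N T).

Definition real_gaussian_channel (T N : 'M[R]_(2 * n)) (d : 'cV[R]_(2 * n)) : Prop :=
  gaussian_channel T N d /\
  (forall i : 'I_(2 * n), odd i -> d i 0 = 0) /\
  (forall i j : 'I_(2 * n), ~~ odd i -> odd j -> N i j = 0) /\
  ((forall i j : 'I_(2 * n), odd i -> T i j = 0) \/
   (forall i j : 'I_(2 * n), odd i != odd j -> T i j = 0)).

Definition gaussian_superchannel (A O Y : 'M[R]_(2 * n)) (dbar : 'cV[R]_(2 * n)) : Prop :=
  Y^T = Y /\ O *m O^T = 1%:M /\ psdC (unc_mx Y A) /\ psdC (unc_mx 0 O).

Definition sc_T (A O : 'M[R]_(2 * n)) (T : 'M[R]_(2 * n)) : 'M[R]_(2 * n) :=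
  A *m T *m Sigma *m O^T *m Sigma.
Definition sc_N (A Y : 'M[R]_(2 * n)) (N : 'M[R]_(2 * n)) : 'M[R]_(2 * n) :=
  A *m N *m A^T + Y.
Definition sc_d (A : 'M[R]_(2 * n)) (dbar d : 'cV[R]_(2 * n)) : 'cV[R]_(2 * n) :=
  A *m d + dbar.

Definition real_gaussian_superchannel (A O Y : 'M[R]_(2 * n)) (dbar : 'cV[R]_(2 * n)) : Prop :=
  gaussian_superchannel A O Y dbar /\
  forall (T N : 'M[R]_(2 * n)) (d : 'cV[R]_(2 * n)),
    real_gaussian_channel T N d ->
    real_gaussian_channel (sc_T A O T) (sc_N A Y N) (sc_d A dbar d).

End Defs.

From HB Require Import structures.
From mathcomp Require Import all_boot all_order all_algebra.
From mathcomp Require Import complex.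
From mathcomp Require Import ring zify.
Import Order.TTheory GRing.Theory Num.Theory.
Local Open Scope ring_scope.

(* Sufficiency: the parity patterns of a real channel are stable under the
   products defining its image, and the symplectic defect of the image,
   [Delta - T' Delta T'^T], is the sum of congruent copies of the defects of
   the channel, of [A] and of [O], hence the image is again a channel.
   Necessity: on the identity channel Phi yields the conditions on [dbar] and
   [Y], and shows that [A S], with [S = Sigma O^T Sigma], either has zero odd
   rows or does not mix parities; displacement channels kill the entries of
   [A] in odd rows and even columns.  If some odd row of [A] is nonzero, the
   real symplectic channels [1 + elem_sympl k l] force [S] to vanish on odd
   rows and even columns; being orthogonal, [S] then preserves parities, and
   so do [A = (A S) S^T] and [O = Sigma S^T Sigma]. *)

Set Implicit Arguments. Unset Strict Implicit.

Section ParityPatterns.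
Variables (R : pzRingType) (m : nat).
Implicit Types X Y : 'M[R]_m.

Definition parity_preserving X := forall i j : 'I_m, odd i != odd j -> X i j = 0.
Definition odd_rows_zero X := forall i j : 'I_m, odd i -> X i j = 0.
Definition even_odd_zero X := forall i j : 'I_m, ~~ odd i -> odd j -> X i j = 0.

Lemma parity_preserving1 : parity_preserving 1%:M.
Proof. by move=> i j; rewrite mxE; case: (i =P j) => // ->; rewrite eqxx. Qed.

Lemma parity_preserving_tr X : parity_preserving X -> parity_preserving X^T.
Proof. by move=> ppX i j ij; rewrite mxE ppX // eq_sym. Qed.

Lemma parity_preserving_mul X Y :
  parity_preserving X -> parity_preserving Y -> parity_preserving (X *m Y).
Proof.
move=> ppX ppY i j ij; rewrite mxE big1 // => k _.
have [ik|ik] := eqVneq (odd i) (odd k); last by rewrite ppX ?mul0r.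
by rewrite ppY ?mulr0 // -ik.
Qed.

Lemma odd_rows_zero_mul X Y : odd_rows_zero X -> odd_rows_zero (X *m Y).
Proof. by move=> orX i j oi; rewrite mxE big1 // => k _; rewrite orX ?mul0r. Qed.

Lemma parity_preserving_odd_rows_zero_mul X Y :
  parity_preserving X -> odd_rows_zero Y -> odd_rows_zero (X *m Y).
Proof.
move=> ppX orY i j oi; rewrite mxE big1 // => k _.
by case ok: (odd k); [rewrite orY ?mulr0 | rewrite ppX ?mul0r // oi ok].
Qed.

Lemma odd_rows_zero_mul_tr X Y : odd_rows_zero Y -> even_odd_zero (X *m Y^T).
Proof. by move=> orY i j _ oj; rewrite mxE big1 // => k _; rewrite mxE orY ?mulr0. Qed.

Lemma parity_preserving_even_odd_zero_mul X Y :
  parity_preserving X -> even_odd_zero Y -> even_odd_zero (X *m Y).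
Proof.
move=> ppX eoY i j ei oj; rewrite mxE big1 // => k _.
by case ok: (odd k); [rewrite ppX ?mul0r // ok; case: (odd i) ei | rewrite eoY ?mulr0 ?ok].
Qed.

Lemma even_odd_zero_parity_preserving_mul X Y :
  even_odd_zero X -> parity_preserving Y -> even_odd_zero (X *m Y).
Proof.
move=> eoX ppY i j ei oj; rewrite mxE big1 // => k _.
by case ok: (odd k); [rewrite eoX ?mul0r ?ok | rewrite ppY ?mulr0 // ok oj].
Qed.

End ParityPatterns.

(* Rows and columns of an orthogonal matrix have unit norm, so its even rows
   and its even columns carry the same total squared weight. *)
Lemma orthogonal_odd_even_zero (R : realFieldType) m (S : 'M[R]_m) :
  S *m S^T = 1%:M -> (forall i j : 'I_m, odd i -> ~~ odd j -> S i j = 0) ->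
  forall i j : 'I_m, ~~ odd i -> odd j -> S i j = 0.
Proof.
move=> SST S_oe; have STS := mulmx1C SST.
pose w i j := S i j ^+ 2.
have w_ge0 i j : 0 <= w i j by exact: sqr_ge0.
have row_w i : \sum_j w i j = 1.
  have := congr1 (fun M : 'M[R]_m => M i i) SST; rewrite !mxE eqxx mulr1n => <-.
  by apply: eq_bigr => j _; rewrite mxE.
have col_w j : \sum_i w i j = 1.
  have := congr1 (fun M : 'M[R]_m => M j j) STS; rewrite !mxE eqxx mulr1n => <-.
  by apply: eq_bigr => i _; rewrite mxE.
have even_cols : \sum_(j : 'I_m | ~~ odd j) \sum_(i : 'I_m | ~~ odd i) w i j =
                 \sum_(j : 'I_m | ~~ odd j) 1.
  apply: eq_bigr => j ej; rewrite -(col_w j) [RHS](bigID (fun i : 'I_m => odd i)) /=.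
  by rewrite [X in _ = X + _]big1 ?add0r // => i oi; rewrite /w S_oe ?expr0n.
have even_rows : \sum_(i : 'I_m | ~~ odd i) \sum_j w i j = \sum_(i : 'I_m | ~~ odd i) 1.
  by apply: eq_bigr => i _; apply: row_w.
have eo_w0 : \sum_(i : 'I_m | ~~ odd i) \sum_(j : 'I_m | odd j) w i j = 0.
  have split_rows : \sum_(i : 'I_m | ~~ odd i) \sum_j w i j =
      \sum_(i : 'I_m | ~~ odd i) \sum_(j : 'I_m | odd j) w i j
      + \sum_(i : 'I_m | ~~ odd i) \sum_(j : 'I_m | ~~ odd j) w i j.
    by rewrite -big_split; apply: eq_bigr => i _; rewrite (bigID (fun j : 'I_m => odd j)).
  rewrite exchange_big /= in even_cols.
  by move: even_rows; rewrite -even_cols split_rows => /(canRL (addrK _)); rewrite subrr.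
move=> i j ei oj; apply/eqP; rewrite -sqrf_eq0; apply/eqP.
have := psumr_eq0P (fun k _ => sumr_ge0 _ (fun l _ => w_ge0 k l)) eo_w0 ei.
by move/psumr_eq0P => /(_ (fun l _ => w_ge0 i l) j oj).
Qed.

Lemma mul_delta_mxE (R : pzSemiRingType) m p q (i : 'I_m) (j : 'I_p) (M : 'M[R]_(p, q)) a b :
  (delta_mx i j *m M) a b = (a == i)%:R * M j b.
Proof.
rewrite mxE (bigD1 j) //= big1 => [|k /negbTE kj]; first by rewrite !mxE eqxx andbT addr0.
by rewrite !mxE kj andbF mul0r.
Qed.

Lemma mul_mx_deltaE (R : pzSemiRingType) m p q (i : 'I_p) (j : 'I_q) (M : 'M[R]_(m, p)) a b :
  (M *m delta_mx i j) a b = M a i * (b == j)%:R.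
Proof.
rewrite mxE (bigD1 i) //= big1 => [|k /negbTE ki]; first by rewrite !mxE eqxx addr0.
by rewrite !mxE ki mulr0.
Qed.

Section Positivity.
Variables (R : rcfType) (n : nat).
Implicit Types (N K B T : 'M[R]_(2 * n)) (M : 'M[R[i]]_(2 * n)).

Definition qform M (v : 'cV[R[i]]_(2 * n)) :=
  ((map_mx (@conjc R) v)^T *m M *m v) 0 0.

Lemma qformD M1 M2 v : qform (M1 + M2) v = qform M1 v + qform M2 v.
Proof. by rewrite /qform mulmxDr mulmxDl mxE. Qed.

Lemma qformZ a M v : qform (a *: M) v = a * qform M v.
Proof. by rewrite /qform -scalemxAr -scalemxAl mxE. Qed.

Lemma qform_conj M v :
  qform M (map_mx (@conjc R) v) = (qform (map_mx (@conjc R) M) v)^*%C.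
Proof.
have conjK p q (X : 'M[R[i]]_(p, q)) : map_mx (@conjc R) (map_mx (@conjc R) X) = X.
  by apply/matrixP=> a b; rewrite !mxE conjcK.
have entry_conj (X : 'M[R[i]]_1) : (X 0 0)^*%C = map_mx (@conjc R) X 0 0 by rewrite mxE.
by rewrite /qform entry_conj !map_mxM -map_trmx !conjK.
Qed.

Lemma psdC0 : psdC (0 : 'M[R[i]]_(2 * n)).
Proof. by move=> v; rewrite mulmx0 mul0mx mxE. Qed.

Lemma psdC_add M1 M2 : psdC M1 -> psdC M2 -> psdC (M1 + M2).
Proof.
move=> psd1 psd2 v; change (0 <= qform (M1 + M2) v).
by rewrite qformD; exact: addr_ge0 (psd1 v) (psd2 v).
Qed.

Lemma conj_cmx B : map_mx (@conjc R) (cmx B) = cmx B.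
Proof. by apply/matrixP => a b; rewrite !mxE conjc_real. Qed.

Lemma psdC_congr M B : psdC M -> psdC (cmx B *m M *m (cmx B)^T).
Proof.
move=> psdM v; have := psdM ((cmx B)^T *m v).
by rewrite map_mxM -map_trmx conj_cmx trmx_mul trmxK !mulmxA.
Qed.

Definition psd_pair N K := psdC (cmx N + 'i%C *: cmx K).

Lemma psdC_unc_mxP N T :
  psdC (unc_mx N T) <-> psd_pair N (Delta R n - T *m Delta R n *m T^T).
Proof. by rewrite /psd_pair /unc_mx /cmx map_mxB scalerBr addrA. Qed.

Lemma psd_pair_congr N K B :
  psd_pair N K -> psd_pair (B *m N *m B^T) (B *m K *m B^T).
Proof.
move=> /(psdC_congr B).
by rewrite /psd_pair /cmx mulmxDr mulmxDl -scalemxAr -scalemxAl !map_mxM map_trmx.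
Qed.

Lemma psd_pair_add N1 K1 N2 K2 :
  psd_pair N1 K1 -> psd_pair N2 K2 -> psd_pair (N1 + N2) (K1 + K2).
Proof.
move=> psd1 psd2; have := psdC_add psd1 psd2.
by rewrite /psd_pair /cmx !map_mxD scalerDr addrACA.
Qed.

(* [N - i K] is the entrywise conjugate of [N + i K], and the quadratic form of
   the real part is the mean of the two. *)
Lemma psd_pair_re N K : psd_pair N K -> psdC (cmx N).
Proof.
move=> psdNK v; change (0 <= qform (cmx N) v).
have conj_pair : map_mx (@conjc R) (cmx N + 'i%C *: cmx K) = cmx N + (- 'i%C) *: cmx K.
  by rewrite map_mxD map_mxZ !conj_cmx; congr (_ + _ *: _); apply/eqP;
     rewrite eq_complex /= oppr0 !eqxx.
have qformN : 0 <= qform (cmx N + 'i%C *: cmx K) (map_mx (@conjc R) v) := psdNK _.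
have qformP : 0 <= qform (cmx N + 'i%C *: cmx K) v := psdNK v.
rewrite qform_conj conj_ge0 in qformN.
rewrite conj_pair qformD qformZ in qformN; rewrite qformD qformZ in qformP.
have -> : qform (cmx N) v = (qform (cmx N) v + 'i%C * qform (cmx K) v
                            + (qform (cmx N) v + - 'i%C * qform (cmx K) v)) / 2%:R.
  by field.
by rewrite divr_ge0 ?ler0n // addr_ge0.
Qed.

End Positivity.

Section SymplecticForm.
Variables (R : rcfType) (n : nat).
Implicit Types (A O T M : 'M[R]_(2 * n)).

Definition parity_sign (b : bool) : R := if b then -1 else 1.

Lemma mulSigmamxE M i j : (Sigma R n *m M) i j = parity_sign (odd i) * M i j.
Proof.
rewrite mxE (bigD1 i) //= big1 => [|k /negbTE nk]; first by rewrite !mxE eqxx addr0.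
by rewrite !mxE eq_sym nk mul0r.
Qed.

Lemma mulmxSigmaE M i j : (M *m Sigma R n) i j = M i j * parity_sign (odd j).
Proof.
rewrite mxE (bigD1 j) //= big1 => [|k /negbTE nk]; first by rewrite !mxE eqxx addr0.
by rewrite !mxE nk mulr0.
Qed.

Lemma trmx_Sigma : (Sigma R n)^T = Sigma R n.
Proof. by apply/matrixP=> i j; rewrite !mxE eq_sym; case: eqP => // ->. Qed.

Lemma mulSigmaSigma : Sigma R n *m Sigma R n = 1%:M.
Proof.
apply/matrixP=> i j; rewrite mulSigmamxE !mxE.
by case: eqP => [->|_]; [case: (odd j); rewrite /parity_sign ?mulrNN mulr1 | rewrite mulr0].
Qed.

Lemma Sigma_Delta_Sigma : Sigma R n *m Delta R n *m Sigma R n = - Delta R n.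
Proof.
apply/matrixP=> i j; rewrite mulmxSigmaE mulSigmamxE !mxE /parity_sign.
by case: (odd i); case: (odd j); case: eqP => _ /=; ring.
Qed.

Lemma Sigma_congr_Delta M :
  M *m Sigma R n *m Delta R n *m (M *m Sigma R n)^T = - (M *m Delta R n *m M^T).
Proof.
rewrite trmx_mul trmx_Sigma -!mulmxA [Sigma R n *m (Delta R n *m _)]mulmxA.
by rewrite [Sigma R n *m Delta R n *m _]mulmxA Sigma_Delta_Sigma mulNmx mulmxN !mulmxA.
Qed.

Lemma Delta_sub_sc_T A O T : O^T *m O = 1%:M ->
  let B := A *m T *m Sigma R n *m O^T in
  Delta R n - sc_T A O T *m Delta R n *m (sc_T A O T)^T =
  A *m (Delta R n - T *m Delta R n *m T^T) *m A^T
  + (Delta R n - A *m Delta R n *m A^T)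
  + B *m (Delta R n - O *m Delta R n *m O^T) *m B^T.
Proof.
move=> OTO B.
have BO : B *m O = A *m T *m Sigma R n by rewrite /B -mulmxA OTO mulmx1.
have congrM (X Y Z : 'M[R]_(2 * n)) :
    X *m (Y *m Z *m Y^T) *m X^T = (X *m Y) *m Z *m (X *m Y)^T.
  by rewrite trmx_mul !mulmxA.
rewrite !(mulmxBr, mulmxBl) !congrM BO Sigma_congr_Delta.
have -> : sc_T A O T = B *m Sigma R n by [].
rewrite Sigma_congr_Delta.
set X := A *m Delta R n *m A^T; set Z := (A *m T) *m Delta R n *m (A *m T)^T.
by rewrite !opprK [X - Z + _]addrC (addrA (Delta R n - X)) subrK addrACA addNr addr0.
Qed.
Lemma parity_preserving_Sigma : parity_preserving (Sigma R n).
Proof. by move=> i j ij; rewrite mxE; case: (i =P j) => // eij; rewrite eij eqxx in ij. Qed.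

End SymplecticForm.

Definition prev_ord m (k : 'I_m) : 'I_m :=
  Ordinal (leq_ltn_trans (leq_pred k) (ltn_ord k)).

Section SymplecticShear.
Variables (R : rcfType) (n : nat).
Implicit Types (i j k l : 'I_(2 * n)) (M : 'M[R]_(2 * n)).

Lemma DeltaE i j :
  Delta R n i j = (odd j && (i == j.-1 :> nat))%:R - (odd i && (j == i.-1 :> nat))%:R.
Proof.
rewrite mxE; case: (boolP (odd i)) => oi; case: (boolP (odd j)) => oj /=;
  repeat case: eqP => ? /=; rewrite ?subr0 ?sub0r //; lia.
Qed.

Lemma Delta_antisym i j : Delta R n i j = - Delta R n j i.
Proof. by rewrite !DeltaE opprB. Qed.

Lemma Delta_odd_row l j : odd l -> Delta R n l j = - (j == l.-1 :> nat)%:R.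
Proof.
move=> ol; rewrite DeltaE ol /=.
by case: (boolP (odd j)) => oj; repeat case: eqP => ? //=; rewrite ?sub0r //; exfalso; lia.
Qed.

Lemma Delta_prev_row k j : odd k -> Delta R n (prev_ord k) j = (j == k :> nat)%:R.
Proof.
move=> ok; have ek : odd k.-1 = false by lia.
rewrite DeltaE /= ek /= subr0.
by case: (boolP (odd j)) => oj; repeat case: eqP => ? //=; exfalso; lia.
Qed.

(* On the odd coordinates [1 + elem_sympl k l] acts as the elementary matrix
   [1 + E_kl] and on the even ones as its inverse transpose, which makes it
   symplectic; for [k = l] the weight [c] makes it the squeezing [diag (1/2, 2)]. *)
Let c k l : R := if k == l then 2^-1 else 1.

Definition elem_sympl k l : 'M[R]_(2 * n) :=
  delta_mx k l - c k l *: delta_mx (prev_ord l) (prev_ord k).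

Lemma elem_sympl_mulmxE k l M a b : (elem_sympl k l *m M) a b =
  (a == k :> nat)%:R * M l b - c k l * ((a == l.-1 :> nat)%:R * M (prev_ord k) b).
Proof.
by rewrite mulmxBl -scalemxAl [LHS]mxE [X in _ + X]mxE [X in _ - X]mxE !mul_delta_mxE.
Qed.

Lemma mulmx_elem_sympl_trE k l M a b : (M *m (elem_sympl k l)^T) a b =
  M a l * (b == k :> nat)%:R - c k l * (M a (prev_ord k) * (b == l.-1 :> nat)%:R).
Proof.
rewrite linearB linearZ /= !trmx_delta mulmxBr -scalemxAr.
by rewrite [LHS]mxE [X in _ + X]mxE [X in _ - X]mxE !mul_mx_deltaE.
Qed.

Lemma elem_sympl_symplectic k l : odd k -> odd l ->
  (1%:M + elem_sympl k l) *m Delta R n *m (1%:M + elem_sympl k l)^T = Delta R n.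
Proof.
move=> ok ol.
rewrite linearD /= trmx1 mulmxDl mul1mx mulmxDl !mulmxDr !mulmx1.
rewrite -[RHS]addr0 -addrA; congr (_ + _).
apply/matrixP=> a b; rewrite -mulmxA [LHS]mxE [X in _ + X]mxE [RHS]mxE.
rewrite !(elem_sympl_mulmxE, mulmx_elem_sympl_trE) !(Delta_antisym a).
rewrite !(Delta_prev_row _ ok) !(Delta_odd_row _ ol) /c.
have -> : (l == l.-1 :> nat) = false by apply/eqP; lia.
have -> : (k.-1 == k :> nat) = false by apply/eqP; lia.
have -> : (k.-1 == l.-1 :> nat) = (k == l).
  by rewrite -val_eqE; apply/eqP/eqP => /= ?; lia.
have -> : (l == k :> nat) = (k == l) by rewrite eq_sym.
by case: (eqVneq k l) => _ /=; field.
Qed.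

Lemma mulmx_delta_mulmxE (M P : 'M[R]_(2 * n)) k l a b :
  (M *m delta_mx k l *m P) a b = M a k * P l b.
Proof.
rewrite -mulmxA mxE (bigD1 k) //= big1 => [|m /negbTE mk].
  by rewrite mul_delta_mxE eqxx mul1r addr0.
by rewrite mul_delta_mxE mk mul0r mulr0.
Qed.

Lemma mulmx_elem_sympl_mulmxE (M P : 'M[R]_(2 * n)) k l a b :
  (M *m elem_sympl k l *m P) a b =
  M a k * P l b - c k l * (M a (prev_ord l) * P (prev_ord k) b).
Proof.
rewrite mulmxBr mulmxBl -scalemxAr -scalemxAl [LHS]mxE [X in _ + X]mxE [X in _ - X]mxE.
by rewrite !mulmx_delta_mulmxE.
Qed.

End SymplecticShear.

Section TestChannels.
Variables (R : rcfType) (n : nat).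
Implicit Types (T : 'M[R]_(2 * n)) (d : 'cV[R]_(2 * n)).

Lemma real_gaussian_channel_symplectic T d :
  T *m Delta R n *m T^T = Delta R n -> parity_preserving T ->
  (forall i : 'I_(2 * n), odd i -> d i 0 = 0) -> real_gaussian_channel T 0 d.
Proof.
move=> sympT ppT d_odd0; split; last by split=> //; split=> [i j _ _|]; [rewrite mxE | right].
split; first by rewrite trmx0.
split; first by rewrite /cmx map_mx0; apply: psdC0.
apply/psdC_unc_mxP; rewrite sympT subrr /psd_pair /cmx !map_mx0 scaler0 addr0.
exact: psdC0.
Qed.

Lemma elem_sympl_parity_preserving (k l : 'I_(2 * n)) : odd k -> odd l ->
  parity_preserving (1%:M + elem_sympl R k l).
Proof.
move=> ok ol a b ab; rewrite !mxE.
have -> : (a == b) = false by apply: contraNF ab => /eqP ->.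
have -> : (a == k) && (b == l) = false.
  by apply: contraNF ab => /andP[/eqP -> /eqP ->]; rewrite ok ol.
have -> : (a == prev_ord l) && (b == prev_ord k) = false.
  by apply: contraNF ab => /andP[/eqP -> /eqP ->] /=; apply/eqP; lia.
by rewrite mulr0 subr0 addr0.
Qed.

Lemma real_channel_id d :
  (forall i : 'I_(2 * n), odd i -> d i 0 = 0) -> real_gaussian_channel 1%:M 0 d.
Proof.
move=> d_odd0; apply: real_gaussian_channel_symplectic d_odd0; last exact: parity_preserving1.
by rewrite mul1mx trmx1 mulmx1.
Qed.

End TestChannels.

Section Necessity.
Variables (R : rcfType) (n : nat) (A O Y : 'M[R]_(2 * n)) (dbar : 'cV[R]_(2 * n)).
Hypothesis OOT : O *m O^T = 1%:M.
Hypothesis realPhi : forall T N d, real_gaussian_channel T N d ->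
  real_gaussian_channel (sc_T A O T) (sc_N A Y N) (sc_d A dbar d).

Implicit Types i j k l : 'I_(2 * n).

Let S := Sigma R n *m O^T *m Sigma R n.

Lemma sc_TE T : sc_T A O T = A *m T *m S.
Proof. by rewrite /sc_T /S !mulmxA. Qed.

Lemma orthogonal_S : S *m S^T = 1%:M.
Proof.
have -> : S^T = Sigma R n *m O *m Sigma R n by rewrite /S !trmx_mul trmx_Sigma trmxK mulmxA.
rewrite /S -!mulmxA (mulmxA (Sigma R n) (Sigma R n)) mulSigmaSigma mul1mx.
by rewrite (mulmxA O^T O) (mulmx1C OOT) mul1mx mulSigmaSigma.
Qed.

Let realPhi_id : real_gaussian_channel (sc_T A O 1%:M) (sc_N A Y 0) (sc_d A dbar 0) :=
  realPhi (real_channel_id (fun i _ => mxE _ _ _ _)).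

Lemma real_sc_dbar i : odd i -> dbar i 0 = 0.
Proof.
have [_ [d0 _]] := realPhi_id.
by move=> oi; have := d0 i oi; rewrite /sc_d mulmx0 add0r.
Qed.

Lemma real_sc_Y : even_odd_zero Y.
Proof.
have [_ [_ [N0 _]]] := realPhi_id.
by move=> i j ei oj; have := N0 i j ei oj; rewrite /sc_N mulmx0 mul0mx add0r.
Qed.

Lemma real_sc_AS : odd_rows_zero (A *m S) \/ parity_preserving (A *m S).
Proof.
have [_ [_ [_ T0]]] := realPhi_id.
by rewrite sc_TE mulmx1 in T0.
Qed.

Lemma real_sc_A_odd_even i j : odd i -> ~~ odd j -> A i j = 0.
Proof.
move=> oi ej; pose d : 'cV[R]_(2 * n) := delta_mx j 0.
have d_odd0 l : odd l -> d l 0 = 0.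
  by move=> ol; rewrite mxE; case: (l =P j) => // lj; rewrite lj (negbTE ej) in ol.
have [_ [dd0 _]] := realPhi (real_channel_id d_odd0).
by have := dd0 i oi; rewrite /sc_d mxE real_sc_dbar // addr0 mul_mx_deltaE eqxx mulr1.
Qed.

(* Phi maps the real channel [1 + elem_sympl k l] to [A (1 + elem_sympl k l) S],
   whose entry at the odd row [i0] and even column [j] reduces to [A i0 k * S l j]. *)
Lemma real_sc_S_odd_even (i0 : 'I_(2 * n)) k : odd i0 -> A i0 k != 0 ->
  forall l j, odd l -> ~~ odd j -> S l j = 0.
Proof.
move=> oi0 Ai0k l j ol ej.
have ok : odd k by apply: contraNT Ai0k => ek; rewrite real_sc_A_odd_even.
have entry0 (M : 'M[R]_(2 * n)) : odd_rows_zero M \/ parity_preserving M -> M i0 j = 0.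
  by case=> [orM | ppM]; [apply: orM | apply: ppM; rewrite oi0; case: (odd j) ej].
have [_ [_ [_ T0]]] := realPhi (real_gaussian_channel_symplectic (d := 0)
  (elem_sympl_symplectic R ok ol) (elem_sympl_parity_preserving R ok ol)
  (fun i _ => mxE _ _ _ _)).
have := entry0 _ T0; rewrite sc_TE mulmxDr mulmxDl mxE mulmx1 (entry0 _ real_sc_AS) add0r.
rewrite mulmx_elem_sympl_mulmxE (@real_sc_A_odd_even i0 (prev_ord l)) //=; last by lia.
by rewrite mul0r mulr0 subr0 => /eqP; rewrite mulf_eq0 (negbTE Ai0k) => /eqP.
Qed.

Lemma real_sc_necessary :
  ((forall i : 'I_(2 * n), odd i -> dbar i 0 = 0) /\ even_odd_zero Y) /\
  (odd_rows_zero A \/ (parity_preserving A /\ parity_preserving O)).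
Proof.
split; first by split; [apply: real_sc_dbar | apply: real_sc_Y].
case: (pickP (fun p : 'I_(2 * n) * 'I_(2 * n) => odd p.1 && (A p.1 p.2 != 0)))
  => [[i0 k] /andP[/= oi0 Ai0k] | A_odd0]; last first.
  by left=> i j oi; apply/eqP; have := A_odd0 (i, j); rewrite /= oi => /negbFE.
right.
have S_oe := real_sc_S_odd_even oi0 Ai0k.
have ppS : parity_preserving S.
  move=> i j; case oi: (odd i); case oj: (odd j) => // _.
    by apply: S_oe; rewrite ?oi ?oj.
  by apply: orthogonal_odd_even_zero orthogonal_S S_oe _ _ _ _; rewrite ?oi ?oj.
have AE : A = A *m S *m S^T by rewrite -mulmxA orthogonal_S mulmx1.
have ppAS : parity_preserving (A *m S).
  case: real_sc_AS => // orAS; move: Ai0k; rewrite AE.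
  by rewrite (odd_rows_zero_mul _ orAS) ?eqxx.
have OE : O = Sigma R n *m S^T *m Sigma R n.
  rewrite /S !trmx_mul trmx_Sigma trmxK !mulmxA mulSigmaSigma mul1mx.
  by rewrite -mulmxA mulSigmaSigma mulmx1.
split; first by rewrite AE; exact: (parity_preserving_mul ppAS (parity_preserving_tr ppS)).
rewrite OE; apply: parity_preserving_mul _ (@parity_preserving_Sigma R n).
exact: parity_preserving_mul (@parity_preserving_Sigma R n) (parity_preserving_tr ppS).
Qed.

End Necessity.

Section Sufficiency.
Variables (R : rcfType) (n : nat) (A O Y : 'M[R]_(2 * n)) (dbar : 'cV[R]_(2 * n)).
Hypothesis Phi : gaussian_superchannel A O Y dbar.

Lemma gaussian_sc_channel T N d : gaussian_channel T N d ->
  gaussian_channel (sc_T A O T) (sc_N A Y N) (sc_d A dbar d).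
Proof.
move=> [NT [psdN /psdC_unc_mxP psdU]].
have [YT [OOT [/psdC_unc_mxP psdY /psdC_unc_mxP psdO]]] := Phi.
split; first by rewrite /sc_N linearD /= !trmx_mul trmxK NT YT mulmxA.
split.
  have -> : cmx (sc_N A Y N) = cmx A *m cmx N *m (cmx A)^T + cmx Y.
    by rewrite /cmx map_mxD !map_mxM map_trmx.
  by apply: psdC_add; [exact: psdC_congr | exact: psd_pair_re psdY].
apply/psdC_unc_mxP; rewrite Delta_sub_sc_T; last exact: mulmx1C.
set B := A *m T *m Sigma R n *m O^T.
have -> : sc_N A Y N = A *m N *m A^T + Y + B *m 0 *m B^T by rewrite mulmx0 mul0mx addr0.
apply: psd_pair_add (psd_pair_congr B psdO).
exact: psd_pair_add (psd_pair_congr A psdU) psdY.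
Qed.

Hypothesis dbar_odd0 : forall i : 'I_(2 * n), odd i -> dbar i 0 = 0.
Hypothesis eoY : even_odd_zero Y.
Hypothesis A_cond : odd_rows_zero A \/ parity_preserving A /\ parity_preserving O.

Lemma real_sc_sufficient : real_gaussian_superchannel A O Y dbar.
Proof.
split=> // T N d [gT [d_odd0 [eoN T_cond]]].
split; first exact: gaussian_sc_channel.
split.
  move=> i oi; rewrite /sc_d !mxE dbar_odd0 // addr0 big1 // => j _.
  case oj: (odd j); first by rewrite d_odd0 ?mulr0.
  by case: A_cond => [orA | [ppA _]]; rewrite ?orA ?ppA ?mul0r // oi oj.
split.
  move=> i j ei oj; rewrite /sc_N mxE eoY // addr0.
  case: A_cond => [orA | [ppA _]]; first exact: odd_rows_zero_mul_tr.
  apply: even_odd_zero_parity_preserving_mul (parity_preserving_tr ppA) _ _ ei oj.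
  exact: parity_preserving_even_odd_zero_mul.
rewrite /sc_T; case: A_cond => [orA | [ppA ppO]]; first by left; do 4 apply: odd_rows_zero_mul.
case: T_cond => [orT | ppT].
  by left; do 3 apply: odd_rows_zero_mul; exact: parity_preserving_odd_rows_zero_mul.
right; apply: parity_preserving_mul _ (@parity_preserving_Sigma R n).
apply: parity_preserving_mul _ (parity_preserving_tr ppO).
apply: parity_preserving_mul _ (@parity_preserving_Sigma R n).
exact: parity_preserving_mul.
Qed.

End Sufficiency.

Unset Implicit Arguments.

Theorem theorem1 (R : rcfType) (n : nat) (n_ge1 : (1 <= n)%N)
    (A O Y : 'M[R]_(2 * n)) (dbar : 'cV[R]_(2 * n)) :
  gaussian_superchannel A O Y dbar ->
  (real_gaussian_superchannel A O Y dbar <->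
   ((forall i : 'I_(2 * n), odd i -> dbar i 0 = 0) /\
    (forall i j : 'I_(2 * n), ~~ odd i -> odd j -> Y i j = 0)) /\
   ((forall i j : 'I_(2 * n), odd i -> A i j = 0) \/
    ((forall i j : 'I_(2 * n), odd i != odd j -> A i j = 0) /\
     (forall i j : 'I_(2 * n), odd i != odd j -> O i j = 0)))).
Proof.
move=> Phi; split=> [[[_ [OOT _]] realPhi] | [[dbar_odd0 eoY] A_cond]].
  exact: real_sc_necessary OOT realPhi.
exact: real_sc_sufficient.
Qed.
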